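(* Let $(X,\beta)$ be a prechart. For all $x,y\in X$ and all $k\in\mathbb{N}$, $x\sim^{(k)}y$ if and only if $\mathsf{bd}_\beta(x,y)\le 2^{-k}$.
   Context: Fix a set $V=\{v_1,v_2,\dots\}$ of variables and a set $\Sigma$ of letters. A prechart is a pair $(X,\beta)$ with $\beta:X\to P_{\mathrm{fin}}(\Sigma\times X+V)$; write $x\xrightarrow{a}x'$ iff $(a,x')\in\beta(x)$, $x\rhd v$ iff $v\in\beta(x)$, and $E(x)=\beta(x)\cap V$. Stratified bisimilarity: $x\sim^{(0)}y$ always; $x\sim^{(n+1)}y$ iff $E(x)=E(y)$, every $x\xrightarrow{a}x'$ is matched by some $y\xrightarrow{a}y'$ with $x'\sim^{(n)}y'$, and symmetrically. A 1-bounded pseudometric on $X$ is $d:X\times X\to[0,1]$ with $d(x,x)=0$, symmetry and triangle inequality; $D_X$ is the set of these, ordered pointwise. For $d\in D_X$, $d^\uparrow$ on $\Sigma\times X+V$ is $d^\uparrow((a,x),(a,y))=\tfrac12 d(x,y)$, $d^\uparrow(m,n)=0$ if $m=n$, $1$ otherwise. $\mathcal H(d)(A,B)=\max\{\sup_{x\in A}\inf_{y\in B}d(x,y),\sup_{y\in B}\inf_{x\in A}d(y,x)\}$ with $\sup\emptyset=0$, $\inf\emptyset=1$. $\Phi_\beta(d)(x,y)=\mathcal H(d^\uparrow)(\beta(x),\beta(y))$, a monotone map on $D_X$; $\mathsf{bd}_\beta$ is its least fixpoint (so $\mathsf{bd}_\beta=\Phi_\beta(\mathsf{bd}_\beta)$).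 *)

From Stdlib Require Import Reals List ClassicalEpsilon Arith.
Import ListNotations.
Open Scope R_scope.

Section Prechart.
Variables (Sigma X : Type).

(* V = {v_1, v_2, ...} is represented by nat.
   A prechart is beta : X -> P_fin(Sigma x X + V); finite sets are
   represented by lists (membership via In; order/duplicates irrelevant). *)
Definition letter_or_var : Type := ((Sigma * X) + nat)%type.

Variable beta : X -> list letter_or_var.

Definition sameE (x y : X) : Prop :=
  forall v : nat, In (inr v) (beta x) <-> In (inr v) (beta y).

Fixpoint bisim (n : nat) (x y : X) : Prop :=
  match n with
  | O => True
  | S n' =>
      sameE x y /\
      (forall (a : Sigma) (x' : X), In (inl (a, x')) (beta x) ->
         exists y' : X, In (inl (a, y')) (beta y) /\ bisim n' x' y') /\
      (forall (a : Sigma) (y' : X), In (inl (a, y')) (beta y) ->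
         exists x' : X, In (inl (a, x')) (beta x) /\ bisim n' x' y')
  end.

Definition is_pm (d : X -> X -> R) : Prop :=
  (forall x y, 0 <= d x y <= 1) /\
  (forall x, d x x = 0) /\
  (forall x y, d x y = d y x) /\
  (forall x y z, d x z <= d x y + d y z).

Definition lift (d : X -> X -> R) (m n : letter_or_var) : R :=
  match m, n with
  | inl (a, x), inl (b, y) =>
      if excluded_middle_informative (a = b) then / 2 * d x y else 1
  | inr v, inr w => if Nat.eq_dec v w then 0 else 1
  | _, _ => 1
  end.

(* sup and inf over finite sets, with sup {} = 0, inf {} = 1 *)
Definition sup_list (l : list R) : R :=
  match l with [] => 0 | a :: t => fold_right Rmax a t end.
Definition inf_list (l : list R) : R :=
  match l with [] => 1 | a :: t => fold_right Rmin a t end.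

Definition hausdorff (e : letter_or_var -> letter_or_var -> R)
  (A B : list letter_or_var) : R :=
  Rmax (sup_list (map (fun m => inf_list (map (fun n => e m n) B)) A))
       (sup_list (map (fun n => inf_list (map (fun m => e n m) A)) B)).

Definition Phi (d : X -> X -> R) : X -> X -> R :=
  fun x y => hausdorff (lift d) (beta x) (beta y).

Definition is_lfp (d : X -> X -> R) : Prop :=
  is_pm d /\ (forall x y, Phi d x y = d x y) /\
  (forall d' : X -> X -> R, is_pm d' -> (forall x y, Phi d' x y = d' x y) ->
     forall x y, d x y <= d' x y).

Definition bd : X -> X -> R :=
  epsilon (inhabits (fun _ _ : X => 0)) is_lfp.

End Prechart.

Arguments bisim {Sigma X} beta n x y.
Arguments bd {Sigma X} beta _ _.

From Stdlib Require Import Reals List Lra Lia ClassicalEpsilon Classical Arith Wf_nat.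
Open Scope R_scope.

(* Let N(x, y) be the least N with x and y not (N+1)-bisimilar, and put
   d*(x, y) = 2^-N (or 0 if there is no such N), so that d*(x, y) <= 2^-k iff
   x ~^(k) y.  Since Phi halves distances of successors, Phi d* <= 2^-k also
   characterises k-bisimilarity; as both only take the values 0 and 2^-j, d* is
   a fixpoint of Phi.  Conversely any pseudometric fixpoint d satisfies
   d(x, y) < 2^-k => x ~^(k+1) y, hence d* <= d.  So bd = d*. *)

Lemma inv_pow2_pos n : 0 < / 2 ^ n.
Proof. apply Rinv_0_lt_compat, pow_lt; lra. Qed.

Lemma inv_pow2_S n : / 2 ^ S n = / 2 * / 2 ^ n.
Proof. simpl. apply Rinv_mult. Qed.

Lemma inv_pow2_le_1 n : / 2 ^ n <= 1.
Proof.
  induction n as [|n IH]; simpl; [rewrite Rinv_1; lra|].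
  rewrite Rinv_mult. lra.
Qed.

Lemma inv_pow2_le m n : (m <= n)%nat -> / 2 ^ n <= / 2 ^ m.
Proof.
  induction 1 as [|n _ IH]; [lra|].
  rewrite inv_pow2_S. pose proof (inv_pow2_pos n). lra.
Qed.

Lemma inv_pow2_S_lt n : / 2 ^ S n < / 2 ^ n.
Proof. rewrite inv_pow2_S. pose proof (inv_pow2_pos n). lra. Qed.

(* The values taken by the bisimulation distance: 0 and the powers 2^-j. *)
Definition half_power (a : R) : Prop := a = 0 \/ exists j, a = / 2 ^ j.

Lemma half_power_1 : half_power 1.
Proof. right. exists 0%nat. simpl. now rewrite Rinv_1. Qed.

Lemma half_power_half a : half_power a -> half_power (/ 2 * a).
Proof.
  intros [->|[j ->]]; [left; ring|].
  right. exists (S j). now rewrite inv_pow2_S.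
Qed.

Lemma half_power_bounds a : half_power a -> 0 <= a <= 1.
Proof.
  intros [->|[j ->]]; [lra|].
  pose proof (inv_pow2_pos j). pose proof (inv_pow2_le_1 j). lra.
Qed.

Lemma half_power_le a b : half_power a -> half_power b ->
  (forall k, b <= / 2 ^ k -> a <= / 2 ^ k) -> a <= b.
Proof.
  intros Ha [->|[j ->]] H; [|apply H; lra].
  destruct Ha as [->|[j ->]]; [lra|].
  pose proof (H (S j) (Rlt_le _ _ (inv_pow2_pos _))).
  pose proof (inv_pow2_S_lt j). lra.
Qed.

Lemma half_power_eq a b : half_power a -> half_power b ->
  (forall k, a <= / 2 ^ k <-> b <= / 2 ^ k) -> a = b.
Proof.
  intros Ha Hb H.
  apply Rle_antisym; apply half_power_le; auto; intros k; apply H.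
Qed.

Lemma sup_list_closed (P : R -> Prop) l :
  P 0 -> (forall r, In r l -> P r) -> P (sup_list l).
Proof.
  intros P0 Hl. destruct l as [|a l]; simpl in *; auto.
  induction l as [|b l IH]; simpl in *; auto.
  apply Rmax_case; [auto|apply IH; intuition].
Qed.

Lemma inf_list_closed (P : R -> Prop) l :
  P 1 -> (forall r, In r l -> P r) -> P (inf_list l).
Proof.
  intros P1 Hl. destruct l as [|a l]; simpl in *; auto.
  induction l as [|b l IH]; simpl in *; auto.
  apply Rmin_case; [auto|apply IH; intuition].
Qed.

Lemma Rmax_le_iff a b t : Rmax a b <= t <-> a <= t /\ b <= t.
Proof. unfold Rmax; destruct (Rle_dec a b); split; intros; lra. Qed.

Lemma Rmin_le_iff a b t : Rmin a b <= t <-> a <= t \/ b <= t.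
Proof. unfold Rmin; destruct (Rle_dec a b); split; intros; lra. Qed.

Lemma sup_list_le_iff l t : 0 <= t ->
  sup_list l <= t <-> (forall r, In r l -> r <= t).
Proof.
  intros Ht. destruct l as [|a l]; simpl; [firstorder lra|].
  induction l as [|b l IH]; simpl; [firstorder congruence|].
  rewrite Rmax_le_iff, IH. firstorder congruence.
Qed.

Lemma inf_list_le_iff l t : t < 1 ->
  inf_list l <= t <-> (exists r, In r l /\ r <= t).
Proof.
  intros Ht. destruct l as [|a l]; simpl; [firstorder lra|].
  induction l as [|b l IH]; simpl; [firstorder congruence|].
  rewrite Rmin_le_iff, IH. firstorder congruence.
Qed.

Lemma nat_least_exists (P : nat -> Prop) :
  (exists n, P n) -> exists n, P n /\ forall m, P m -> (n <= m)%nat.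
Proof.
  intros H. destruct (dec_inh_nat_subset_has_unique_least_element P (fun n => classic (P n)) H)
    as [n [Hn _]].
  exists n. exact Hn.
Qed.

Lemma sup_inf_le_iff {U V : Type} (f : U -> V -> R) A B t : 0 <= t < 1 ->
  sup_list (map (fun m => inf_list (map (f m) B)) A) <= t <->
  (forall m, In m A -> exists n, In n B /\ f m n <= t).
Proof.
  intros Ht. rewrite sup_list_le_iff by lra. split.
  - intros H m Hm.
    destruct (proj1 (inf_list_le_iff _ _ (proj2 Ht)) (H _ (in_map _ _ _ Hm))) as [r [Hr Hle]].
    apply in_map_iff in Hr. destruct Hr as [n [<- Hn]]. eauto.
  - intros H r Hr. apply in_map_iff in Hr. destruct Hr as [m [<- Hm]].
    apply inf_list_le_iff; [lra|].
    destruct (H m Hm) as [n [Hn Hle]]. exists (f m n). split; auto. now apply in_map.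
Qed.

Section Prechart.
Variables (Sigma X : Type) (beta : X -> list (letter_or_var Sigma X)).

Lemma hausdorff_le_iff (e : letter_or_var Sigma X -> letter_or_var Sigma X -> R) A B t :
  0 <= t < 1 ->
  hausdorff Sigma X e A B <= t <->
  (forall m, In m A -> exists n, In n B /\ e m n <= t) /\
  (forall n, In n B -> exists m, In m A /\ e n m <= t).
Proof.
  intros Ht. unfold hausdorff. rewrite Rmax_le_iff, !sup_inf_le_iff by exact Ht.
  reflexivity.
Qed.

Lemma lift_le_iff d m n t : 0 <= t < 1 ->
  lift Sigma X d m n <= t <->
  (exists v, m = inr v /\ n = inr v) \/
  (exists a x' y', m = inl (a, x') /\ n = inl (a, y') /\ d x' y' <= 2 * t).
Proof.
  intros Ht. split.
  - destruct m as [[a x']|v], n as [[b y']|w]; simpl; try lra.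
    + destruct (excluded_middle_informative (a = b)) as [<-|]; [|lra].
      right. exists a, x', y'. repeat split. lra.
    + destruct (Nat.eq_dec v w) as [<-|]; [|lra]. left; eauto.
  - intros [[v [-> ->]]|[a [x' [y' [-> [-> Hd]]]]]]; simpl.
    + destruct (Nat.eq_dec v v); [lra|congruence].
    + destruct (excluded_middle_informative (a = a)); [lra|congruence].
Qed.

(* [bisim beta (S n)] is convertible to [transfer (bisim beta n)]. *)
Definition transfer (P : X -> X -> Prop) (x y : X) : Prop :=
  sameE Sigma X beta x y /\
  (forall a x', In (inl (a, x')) (beta x) -> exists y', In (inl (a, y')) (beta y) /\ P x' y') /\
  (forall a y', In (inl (a, y')) (beta y) -> exists x', In (inl (a, x')) (beta x) /\ P x' y').

Lemma transfer_mono {P Q : X -> X -> Prop} {x y : X} :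
  (forall x' y', P x' y' -> Q x' y') -> transfer P x y -> transfer Q x y.
Proof.
  intros PQ [HE [H1 H2]]. split; [exact HE|split].
  - intros a x' Hx. destruct (H1 _ _ Hx) as [y' [Hy HP]]. eauto.
  - intros a y' Hy. destruct (H2 _ _ Hy) as [x' [Hx HP]]. eauto.
Qed.

Lemma Phi_le_transfer d x y t : (forall x y, d x y = d y x) -> 0 <= t < 1 ->
  Phi Sigma X beta d x y <= t <-> transfer (fun x' y' => d x' y' <= 2 * t) x y.
Proof.
  intros Hsym Ht. unfold Phi. rewrite hausdorff_le_iff by exact Ht.
  setoid_rewrite (lift_le_iff d _ _ _ Ht). split.
  - intros [H1 H2]. split; [|split].
    + intros v. split; intros Hv.
      * destruct (H1 _ Hv) as [n [Hn [[w [[= <-] ->]]|[a [x' [y' [[=] _]]]]]]]; auto.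
      * destruct (H2 _ Hv) as [n [Hn [[w [[= <-] ->]]|[a [x' [y' [[=] _]]]]]]]; auto.
    + intros a x' Hx.
      destruct (H1 _ Hx) as [n [Hn [[w [[=] _]]|[b [x'' [y' [[= <- <-] [-> Hd]]]]]]]]; eauto.
    + intros a y' Hy.
      destruct (H2 _ Hy) as [n [Hn [[w [[=] _]]|[b [y'' [x' [[= <- <-] [-> Hd]]]]]]]].
      rewrite Hsym in Hd. eauto.
  - intros [HE [H1 H2]]. split.
    + intros [[a x']|v] Hm.
      * destruct (H1 _ _ Hm) as [y' [Hy Hd]]. exists (inl (a, y')). split; [exact Hy|].
        right. eauto 6.
      * exists (inr v). split; [now apply HE|]. left; eauto.
    + intros [[a y']|v] Hm.
      * destruct (H2 _ _ Hm) as [x' [Hx Hd]]. exists (inl (a, x')). split; [exact Hx|].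
        right. rewrite Hsym in Hd. eauto 6.
      * exists (inr v). split; [now apply HE|]. left; eauto.
Qed.

Lemma bisim_S_le n x y : bisim beta (S n) x y -> bisim beta n x y.
Proof.
  revert x y; induction n as [|n IH]; intros x y H; [exact I|].
  exact (transfer_mono IH H).
Qed.

Lemma bisim_le m n x y : (m <= n)%nat -> bisim beta n x y -> bisim beta m x y.
Proof. induction 1; auto using bisim_S_le. Qed.

Lemma bisim_refl n x : bisim beta n x x.
Proof.
  revert x; induction n as [|n IH]; intros x; [exact I|].
  split; [intros v; tauto|]. split; intros a z Hz; exists z; auto.
Qed.

Lemma bisim_sym n x y : bisim beta n x y -> bisim beta n y x.
Proof.
  revert x y; induction n as [|n IH]; intros x y H; [exact I|].
  destruct H as [HE [H1 H2]]. split; [intros v; symmetry; apply HE|split].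
  - intros a y' Hy. destruct (H2 _ _ Hy) as [x' [Hx Hb]]. eauto.
  - intros a x' Hx. destruct (H1 _ _ Hx) as [y' [Hy Hb]]. eauto.
Qed.

Lemma bisim_trans n x y z : bisim beta n x y -> bisim beta n y z -> bisim beta n x z.
Proof.
  revert x y z; induction n as [|n IH]; intros x y z H G; [exact I|].
  destruct H as [HE [H1 H2]], G as [GE [G1 G2]].
  split; [intros v; rewrite (HE v); apply GE|split].
  - intros a x' Hx. destruct (H1 _ _ Hx) as [y' [Hy Hb]].
    destruct (G1 _ _ Hy) as [z' [Hz Hc]]. eauto.
  - intros a z' Hz. destruct (G2 _ _ Hz) as [y' [Hy Hb]].
    destruct (H2 _ _ Hy) as [x' [Hx Hc]]. eauto.
Qed.

(* A fixpoint satisfies d x' y' <= 2 d x y for matched successors, so d x y < 2^-k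
   propagates to d x' y' < 2^-(k-1). *)
Lemma fixpoint_lt_bisim d : (forall x y, 0 <= d x y) -> (forall x y, d x y = d y x) ->
  (forall x y, Phi Sigma X beta d x y = d x y) ->
  forall k x y, d x y < / 2 ^ k -> bisim beta (S k) x y.
Proof.
  intros Hpos Hsym Hfix.
  assert (Htr : forall x y, d x y < 1 -> transfer (fun x' y' => d x' y' <= 2 * d x y) x y).
  { intros x y Hlt. apply Phi_le_transfer; [exact Hsym|split; [apply Hpos|exact Hlt]|].
    rewrite Hfix. lra. }
  induction k as [|k IH]; intros x y Hlt.
  - simpl in Hlt. rewrite Rinv_1 in Hlt.
    exact (transfer_mono (fun _ _ _ => I) (Htr x y Hlt)).
  - pose proof (inv_pow2_le_1 (S k)).
    refine (transfer_mono _ (Htr x y ltac:(lra))).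
    intros x' y' Hd. apply IH. rewrite inv_pow2_S in Hlt. lra.
Qed.

(* [bisim_dist x y] is 2^-N for the least N with x and y not (N+1)-bisimilar,
   and 0 if they are k-bisimilar for every k. *)
Definition bisim_dist (x y : X) : R :=
  match excluded_middle_informative (exists n, ~ bisim beta (S n) x y) with
  | left H => / 2 ^ proj1_sig (constructive_indefinite_description _ (nat_least_exists _ H))
  | right _ => 0
  end.

Lemma bisim_dist_spec x y :
  half_power (bisim_dist x y) /\ forall k, bisim_dist x y <= / 2 ^ k <-> bisim beta k x y.
Proof.
  unfold bisim_dist. destruct (excluded_middle_informative _) as [H|H].
  - destruct (constructive_indefinite_description _ _) as [N [HN Hmin]]; simpl.
    assert (BN : bisim beta N x y).
    { destruct N as [|N]; [exact I|]. apply NNPP. intros C. specialize (Hmin N C). lia. }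
    split; [right; eauto|]. intros k. split; intros Hk.
    + destruct (le_lt_dec k N) as [h|h]; [eapply bisim_le; eauto|].
      pose proof (inv_pow2_le _ _ h). pose proof (inv_pow2_S_lt N). lra.
    + destruct (le_lt_dec k N) as [h|h]; [now apply inv_pow2_le|].
      exfalso. apply HN. eapply bisim_le; eauto.
  - split; [left; reflexivity|]. intros k. split; intros _.
    + destruct k as [|k]; [exact I|]. apply NNPP. intros C. apply H; eauto.
    + apply Rlt_le, inv_pow2_pos.
Qed.

Lemma half_power_bisim_dist x y : half_power (bisim_dist x y).
Proof. apply bisim_dist_spec. Qed.

Lemma bisim_dist_le_iff x y k : bisim_dist x y <= / 2 ^ k <-> bisim beta k x y.
Proof. apply bisim_dist_spec. Qed.

Lemma bisim_dist_sym x y : bisim_dist x y = bisim_dist y x.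
Proof.
  apply half_power_eq; try apply half_power_bisim_dist.
  intros k. rewrite !bisim_dist_le_iff. split; apply bisim_sym.
Qed.

Lemma half_power_Phi_bisim_dist x y : half_power (Phi Sigma X beta bisim_dist x y).
Proof.
  assert (Hlift : forall m n, half_power (lift Sigma X bisim_dist m n)).
  { intros [[a x']|v] [[b y']|w]; simpl; try apply half_power_1.
    - destruct (excluded_middle_informative (a = b));
        [apply half_power_half, half_power_bisim_dist|apply half_power_1].
    - destruct (Nat.eq_dec v w); [left; reflexivity|apply half_power_1]. }
  unfold Phi, hausdorff.
  apply Rmax_case; apply sup_list_closed; try (left; reflexivity);
    intros r Hr; apply in_map_iff in Hr; destruct Hr as [m [<- _]];
    apply inf_list_closed; try apply half_power_1;
    intros r Hr; apply in_map_iff in Hr; destruct Hr as [n [<- _]]; apply Hlift.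
Qed.

Lemma Phi_bisim_dist_le_iff x y k :
  Phi Sigma X beta bisim_dist x y <= / 2 ^ k <-> bisim beta k x y.
Proof.
  destruct k as [|k].
  - simpl. rewrite Rinv_1. split; intros _; [exact I|].
    apply half_power_bounds, half_power_Phi_bisim_dist.
  - assert (Ht : 0 <= / 2 ^ S k < 1).
    { pose proof (inv_pow2_pos (S k)). pose proof (inv_pow2_S_lt k).
      pose proof (inv_pow2_le_1 k). lra. }
    rewrite (Phi_le_transfer _ _ _ _ bisim_dist_sym Ht).
    replace (2 * / 2 ^ S k) with (/ 2 ^ k) by (rewrite inv_pow2_S; lra).
    split; apply transfer_mono; intros x' y'; apply bisim_dist_le_iff.
Qed.

Lemma bisim_dist_fixpoint x y : Phi Sigma X beta bisim_dist x y = bisim_dist x y.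
Proof.
  apply half_power_eq; [apply half_power_Phi_bisim_dist|apply half_power_bisim_dist|].
  intros k. now rewrite Phi_bisim_dist_le_iff, bisim_dist_le_iff.
Qed.

(* bisim_dist is even an ultrametric, since bisimilarity at each depth is transitive. *)
Lemma bisim_dist_pm : is_pm X bisim_dist.
Proof.
  split; [|split; [|split]].
  - intros x y. apply half_power_bounds, half_power_bisim_dist.
  - intros x. apply half_power_eq; [apply half_power_bisim_dist|left; reflexivity|].
    intros k. rewrite bisim_dist_le_iff.
    split; intros _; [apply Rlt_le, inv_pow2_pos|apply bisim_refl].
  - exact bisim_dist_sym.
  - intros x y z.
    assert (Hmax : bisim_dist x z <= Rmax (bisim_dist x y) (bisim_dist y z)).
    { apply half_power_le;
        [apply half_power_bisim_dist|apply Rmax_case; apply half_power_bisim_dist|].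
      intros k [Hxy Hyz]%Rmax_le_iff. apply bisim_dist_le_iff in Hxy, Hyz.
      apply bisim_dist_le_iff, bisim_trans with y; assumption. }
    pose proof (half_power_bounds _ (half_power_bisim_dist x y)).
    pose proof (half_power_bounds _ (half_power_bisim_dist y z)).
    revert Hmax. apply Rmax_case; lra.
Qed.

Lemma bisim_dist_least d : is_pm X d -> (forall x y, Phi Sigma X beta d x y = d x y) ->
  forall x y, bisim_dist x y <= d x y.
Proof.
  intros [Hb [_ [Hsym _]]] Hfix x y. apply Rnot_lt_le. intros Hlt.
  destruct (half_power_bisim_dist x y) as [E|[j E]]; rewrite E in Hlt.
  - specialize (Hb x y). lra.
  - apply fixpoint_lt_bisim in Hlt; [|intros; apply Hb|exact Hsym|exact Hfix].
    apply bisim_dist_le_iff in Hlt. rewrite E in Hlt.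
    pose proof (inv_pow2_S_lt j). lra.
Qed.

Lemma bisim_dist_lfp : is_lfp Sigma X beta bisim_dist.
Proof. split; [exact bisim_dist_pm|split; [exact bisim_dist_fixpoint|exact bisim_dist_least]]. Qed.

Lemma bd_eq_bisim_dist x y : bd beta x y = bisim_dist x y.
Proof.
  assert (Hbd : is_lfp Sigma X beta (bd beta)).
  { unfold bd. apply epsilon_spec. exists bisim_dist. exact bisim_dist_lfp. }
  destruct Hbd as [Hpm [Hfix Hleast]].
  apply Rle_antisym.
  - apply Hleast; [exact bisim_dist_pm|exact bisim_dist_fixpoint].
  - apply bisim_dist_least; assumption.
Qed.

End Prechart.

Theorem mainTheorem3 (Sigma X : Type) (beta : X -> list ((Sigma * X) + nat)%type)
  (x y : X) (k : nat) :
  bisim beta k x y <-> bd beta x y <= / 2 ^ k.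
Proof. rewrite bd_eq_bisim_dist. symmetry. apply bisim_dist_le_iff. Qed.
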